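(* Let $T$ be a tree on $n$ vertices. If there is a leaf $v$ of $T$ with $|N_2(v)|\le\lceil n/2\rceil-4$, then $\operatorname{diam}(\mathcal{C}_3(T))\ge\lfloor 3n/2\rfloor+1$.
   Context: For a vertex $v$ of a tree, $N_i(v)$ is the set of vertices at distance exactly $i$ from $v$. A proper 3-coloring of a tree $T=(V,E)$ is a map $f\colon V\to\mathbb{Z}/3\mathbb{Z}$ with $f(u)\neq f(v)$ for every edge $uv\in E$. The 3-coloring graph $\mathcal{C}_3(T)$ has the proper 3-colorings as vertices, two colorings adjacent iff they differ at exactly one vertex; $\operatorname{diam}$ denotes graph diameter. *)

From mathcomp Require Import all_boot.
Set Implicit Arguments. Unset Strict Implicit. Unset Printing Implicit Defensive.

Definition simple_graph (V : finType) (e : rel V) : Prop :=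
  symmetric e /\ irreflexive e.

Fixpoint walk_len (V : finType) (e : rel V) (k : nat) (x y : V) : bool :=
  match k with
  | 0 => x == y
  | k'.+1 => [exists z, e x z && walk_len e k' z y]
  end.

Definition at_dist (V : finType) (e : rel V) (x y : V) (k : nat) : bool :=
  walk_len e k x y && [forall j : 'I_k, ~~ walk_len e j x y].

(* A tree: a connected simple graph with exactly n-1 (unordered) edges,
   i.e. 2(n-1) ordered adjacent pairs. *)
Definition is_tree (V : finType) (e : rel V) : Prop :=
  simple_graph e /\ (forall x y : V, connect e x y) /\
  #|[set p : V * V | e p.1 p.2]| = 2 * (#|V| - 1).

Definition Nbhd (V : finType) (e : rel V) (i : nat) (v : V) : {set V} :=
  [set u | at_dist e v u i].

Definition is_leaf (V : finType) (e : rel V) (v : V) : bool :=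
  #|[set u | e v u]| == 1.

Definition coloring (V : finType) := {ffun V -> 'I_3}.

Definition proper3 (V : finType) (e : rel V) (f : coloring V) : bool :=
  [forall x, forall y, e x y ==> (f x != f y)].

Definition col_adj (V : finType) (e : rel V) : rel (coloring V) :=
  fun f g => [&& proper3 e f, proper3 e g & #|[set x | f x != g x]| == 1].

(* diam(G) >= k  (diameter = sup of pairwise distances, +oo if disconnected):
   some two vertices of G are at no walk-distance < k. *)
Definition diam_ge (W : finType) (P : W -> bool) (r : rel W) (k : nat) : Prop :=
  exists f g, P f /\ P g /\ forall j, j < k -> ~~ walk_len r j f g.

From mathcomp Require Import all_boot all_algebra zify.
Set Implicit Arguments. Unset Strict Implicit. Unset Printing Implicit Defensive.
Import GRing.Theory Num.Theory.

(* Give both colorings integer heights: g the distance d from the leaf v, f the height d + 8 - 2k, where the level k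
   equals d up to N_2, never decreases away from v, stays below 4, and takes the value 2 on exactly ceil(n/2) - 4
   vertices.  A recoloring moves one height by 2, so a walk from f to g of length j turns the height of f into a height
   d + c of g with sum_y |c + 2k(y) - 8| <= 2j; reading colors mod 3 and heights mod 2 forces 6 | c, and both c <= 0
   and c >= 6 make the sum exceed 2 floor(3n/2).  The hypothesis on |N_2(v)| is what leaves room for the 2-level. *)

Section Walks.
Variables (V : finType) (e : rel V).

Definition unit_slope (h : V -> nat) :=
  forall x y, e x y -> h y = (h x).+1 \/ h x = (h y).+1.

Lemma walk_lenSr k x y z : walk_len e k x y -> e y z -> walk_len e k.+1 x z.
Proof.
elim: k x => [|k IHk] x /=.
  by move=> /eqP -> yz; apply/existsP; exists z; rewrite yz eqxx.
case/existsP=> w /andP[xw wy] yz; apply/existsP; exists w.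
by rewrite xw; apply: IHk wy yz.
Qed.

Lemma walk_lenSrP k x z :
  walk_len e k.+1 x z -> exists2 y, walk_len e k x y & e y z.
Proof.
elim: k x => [|k IHk] x /=.
  by case/existsP=> w /andP[xw /eqP <-]; exists x; rewrite ?eqxx.
case/existsP=> w /andP[xw wz]; have [y wy yz] := IHk _ wz.
by exists y => //; apply/existsP; exists w; rewrite xw.
Qed.

Lemma connect_walk_len x y : connect e x y -> exists k, walk_len e k x y.
Proof.
case/connectP=> p; elim: p x => [|z p IHp] x /=; first by move=> _ ->; exists 0; exact: eqxx.
case/andP=> xz zp y_last; have [k zk] := IHp _ zp y_last.
by exists k.+1; apply/existsP; exists z; rewrite xz.
Qed.

Section Distance.
Variable v : V.
Hypothesis connected_from_v : forall x, connect e v x.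

Definition dist x : nat := ex_minn (connect_walk_len (connected_from_v x)).

Lemma walk_len_dist x : walk_len e (dist x) v x.
Proof. by rewrite /dist; case: ex_minnP. Qed.

Lemma dist_min x k : walk_len e k v x -> dist x <= k.
Proof. by rewrite /dist; case: ex_minnP => m _; apply. Qed.

Lemma dist_eq0 x : (dist x == 0) = (x == v).
Proof.
apply/eqP/eqP => [d0|->]; first by have := walk_len_dist x; rewrite d0 /= eq_sym => /eqP.
by apply/eqP; rewrite -leqn0 dist_min //= eqxx.
Qed.

Lemma dist_edge x y : e x y -> dist y <= (dist x).+1.
Proof. by move=> xy; apply/dist_min/(walk_lenSr (walk_len_dist x)). Qed.

Lemma dist_parent x : x != v -> exists2 p, e p x & dist x = (dist p).+1.
Proof.
move=> xv; have d_pos : 0 < dist x by rewrite lt0n dist_eq0.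
have := walk_len_dist x; rewrite -(prednK d_pos) => /walk_lenSrP[p vp px].
by exists p => //; have := dist_min vp; have := dist_edge px; lia.
Qed.

Lemma at_dist_dist x k : at_dist e v x k = (dist x == k).
Proof.
apply/andP/eqP => [[vx /forallP short] | <-].
  apply/eqP; rewrite eqn_leq dist_min //= leqNgt; apply/negP => lt_dk.
  by have := short (Ordinal lt_dk); rewrite walk_len_dist.
split; first exact: walk_len_dist.
by apply/forallP => j; apply/negP => /dist_min; have := ltn_ord j; lia.
Qed.

Lemma dist_eq1 x : irreflexive e -> (dist x == 1) = e v x.
Proof.
move=> e_irr; apply/idP/idP => [/eqP d1 | vx].
  by have := walk_len_dist x; rewrite d1 => /existsP[z /andP[vz /eqP <-]].
have : x != v by apply: contraTneq vx => ->; rewrite e_irr.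
have dv : dist v = 0 by apply/eqP; rewrite dist_eq0.
by rewrite -dist_eq0; have := dist_edge vx; rewrite dv; lia.
Qed.

Lemma leaf_dist_cards : irreflexive e -> is_leaf e v ->
  [/\ #|[set y | dist y == 0]| = 1, #|[set y | dist y == 1]| = 1
     & #|[set y | 1 < dist y]| = #|V| - 2].
Proof.
move=> e_irr /cards1P[u vu].
have d1 : [set y | dist y == 1] = [set u].
  by rewrite -vu; apply/setP => y; rewrite !inE dist_eq1.
have vu_neq : v != u.
  have : u \in [set y | e v y] by rewrite vu set11.
  by rewrite inE; apply: contraTneq => <-; rewrite e_irr.
have -> : [set y | dist y == 0] = [set v].
  by apply/setP => y; rewrite !inE dist_eq0.
have -> : [set y | 1 < dist y] = ~: [set v; u].
  apply/setP => y; rewrite !inE -dist_eq0.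
  by have /setP/(_ y) := d1; rewrite !inE => <-; lia.
by rewrite d1 !cards1; split => //; have := cardsC [set v; u]; rewrite cards2 vu_neq; lia.
Qed.

Definition parent x := odflt x [pick p | e p x && (dist x == (dist p).+1)].

Lemma parentP x : x != v -> e (parent x) x /\ dist x = (dist (parent x)).+1.
Proof.
move=> xv; rewrite /parent; case: pickP => [p /andP[px /eqP //] | none].
by have [p px dp] := dist_parent xv; have := none p; rewrite px dp eqxx.
Qed.

(* A spanning set of n - 1 child-parent pairs, hence of 2(n - 1) ordered edges, exhausts all the edges of a tree. *)
Lemma tree_edge_parent : symmetric e ->
    #|[set p : V * V | e p.1 p.2]| = 2 * (#|V| - 1) ->
  forall x y, e x y -> (x != v /\ y = parent x) \/ (y != v /\ x = parent y).
Proof.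
move=> e_sym e_card x y xy.
pose up := [set (z, parent z) | z in [set~ v]].
pose down := [set (parent z, z) | z in [set~ v]].
have card_up : #|up| = #|V|.-1.
  by rewrite card_in_imset ?cardsC1 // => a b _ _ [].
have card_down : #|down| = #|V|.-1.
  by rewrite card_in_imset ?cardsC1 // => a b _ _ [_ ->].
have up_down0 : up :&: down = set0.
  apply/setP => q; rewrite !inE; apply/andP => -[/imsetP[a av ->] /imsetP[b bv [ab ba]]].
  rewrite !in_setC1 in av bv.
  by have := (parentP av).2; have := (parentP bv).2; rewrite -ab ba; lia.
have edgesE : up :|: down = [set p : V * V | e p.1 p.2].
  apply/eqP; rewrite eqEcard cardsU up_down0 cards0 card_up card_down e_card.
  have -> : #|V|.-1 + #|V|.-1 - 0 = 2 * (#|V| - 1) by lia.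
  rewrite leqnn andbT.
  apply/subsetP => q /setUP[] /imsetP[z zv ->]; rewrite in_setC1 in zv; rewrite inE /=.
    by rewrite e_sym (parentP zv).1.
  exact: (parentP zv).1.
have : (x, y) \in up :|: down by rewrite edgesE inE.
case/setUP=> /imsetP[z zv [-> ->]]; rewrite in_setC1 in zv; by [left | right].
Qed.

Lemma tree_dist_slope : symmetric e ->
  #|[set p : V * V | e p.1 p.2]| = 2 * (#|V| - 1) -> unit_slope dist.
Proof.
move=> e_sym e_card x y /(tree_edge_parent e_sym e_card)[] [/parentP[_ d_par] ->];
  by [left | right].
Qed.

End Distance.
End Walks.

Section Lifts.
Variables (V : finType) (e : rel V).
Local Open Scope ring_scope.

Definition is_lift (f : coloring V) (h : V -> int) :=
  (forall y, h y = (f y)%:Z %[mod 3])%Z /\ (forall x y, e x y -> `|h x - h y| = 1).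

Definition mod3_coloring (h : V -> nat) : coloring V := [ffun y => inord (h y %% 3)].

Lemma mod3_coloring_lift h :
  unit_slope e h -> is_lift (mod3_coloring h) (fun y => (h y)%:Z).
Proof.
move=> h_slope; split => [y | x y /h_slope]; last by lia.
by rewrite ffunE inordK ?ltn_pmod //; lia.
Qed.

Lemma lift_proper f h : is_lift f h -> proper3 e f.
Proof.
move=> [h_mod h_adj]; apply/forallP => x; apply/forallP => y; apply/implyP => xy.
apply/negP => /eqP/(congr1 (@nat_of_ord 3)) fxy.
by have := h_mod x; have := h_mod y; have := h_adj _ _ xy; lia.
Qed.

Lemma proper3_edge f x y : proper3 e f -> e x y -> f x != f y.
Proof. by move=> /forallP/(_ x)/forallP/(_ y)/implyP; apply. Qed.

(* If f' recolors the single vertex x, the neighbours of x all carry the third color, so one height step of 2 at x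
   lifts f'. *)
Lemma col_adj_lift f f' h : col_adj e f f' -> is_lift f h ->
  exists x (s : int), (s = 2 \/ s = -2) /\
    is_lift f' (fun y => if y == x then h x + s else h y).
Proof.
case/and3P=> f_proper f'_proper /cards1P[x diff_x] [h_mod h_adj].
have in_diff y : (f y != f' y) = (y == x).
  by have := congr1 (fun A : {set V} => y \in A) diff_x; rewrite !inE.
have f'E y : y != x -> f' y = f y by rewrite -in_diff negbK => /eqP.
have fx : (f' x : nat) != f x by rewrite val_eqE eq_sym in_diff.
pose s : int := if (((f' x)%:Z - (f x)%:Z) %% 3)%Z == 1 then -2 else 2.
have near w : (f' x : nat) != f w -> (f x : nat) != f w ->
    `|h x - h w| = 1 -> `|h x + s - h w| = 1.
  move=> f'xw fxw hxw; have := h_mod x; have := h_mod w.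
  have := ltn_ord (f x); have := ltn_ord (f' x); have := ltn_ord (f w).
  by rewrite /s; case: eqP => ?; lia.
exists x, s; split; first by rewrite /s; case: eqP; auto.
split => [y | a b ab].
  case: eqP => [-> | /eqP yx]; last by rewrite f'E.
  have := h_mod x; have := ltn_ord (f x); have := ltn_ord (f' x).
  by rewrite /s; case: eqP => ?; lia.
move: (proper3_edge f'_proper ab) (proper3_edge f_proper ab) (h_adj _ _ ab).
case: (eqVneq a x) => [-> | ax]; case: (eqVneq b x) => [-> | bx] /=.
- by move=> _ _; rewrite subrr.
- by rewrite (f'E _ bx) -!val_eqE; apply: near.
- rewrite (f'E _ ax) ![f a == _]eq_sym !(distrC (h a)) -!val_eqE.
  exact: near.
- by [].
Qed.

Lemma col_walk_lift j f f' h : walk_len (col_adj e) j f f' -> is_lift f h ->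
  exists h', [/\ is_lift f' h', forall y, (2 %| h' y - h y)%Z
                & (\sum_y absz (h' y - h y)%R <= 2 * j)%N].
Proof.
elim: j f h => [|j IHj] f h /=.
  move=> /eqP <- h_lift; exists h; split => // [y | ]; first by rewrite subrr.
  by rewrite big1 // => y _; rewrite subrr.
case/existsP=> g /andP[fg gf'] h_lift.
have [x [s [s2 g_lift]]] := col_adj_lift fg h_lift.
set hg := fun y => if y == x then h x + s else h y in g_lift.
have [h' [f'_lift h'_even h'_cost]] := IHj _ _ gf' g_lift.
have step_cost : (\sum_y absz (hg y - h y) = 2)%N.
  rewrite (bigD1 x) //= big1 => [|y yx]; first by rewrite /hg eqxx; lia.
  by rewrite /hg (negbTE yx) subrr.
exists h'; split => // [y | ].
  by have := h'_even y; rewrite /hg; case: eqP => [-> |]; lia.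
apply: (@leq_trans (\sum_y (absz (h' y - hg y) + absz (hg y - h y)))).
  by apply: leq_sum => y _; lia.
by rewrite big_split /= step_cost mulnS addnC leq_add2l.
Qed.

Lemma lift_diff_connect g h1 h2 x y : is_lift g h1 -> is_lift g h2 ->
  connect e x y -> h1 x - h2 x = h1 y - h2 y.
Proof.
move=> [mod1 adj1] [mod2 adj2] /connect_walk_len[k].
elim: k x => [|k IHk] x /=; first by move/eqP ->.
case/existsP=> z /andP[xz zy]; rewrite -(IHk _ zy).
by have := adj1 _ _ xz; have := adj2 _ _ xz; have := mod1 x; have := mod1 z;
  have := mod2 x; have := mod2 z; lia.
Qed.

(* Any two lifts of g on a connected graph differ by a constant, here a multiple of 3. *)
Lemma col_walk_shift j f g hf hg : (forall x y, connect e x y) ->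
    walk_len (col_adj e) j f g -> is_lift f hf -> is_lift g hg ->
  exists c : int, [/\ (3 %| c)%Z, forall y, (2 %| hg y + c - hf y)%Z
                & (\sum_y absz (hg y + c - hf y)%R <= 2 * j)%N].
Proof.
move=> e_conn fg hf_lift hg_lift.
have [h [g_lift h_even h_cost]] := col_walk_lift fg hf_lift.
case: (pickP (fun _ : V => true)) => [v _ | V0]; last first.
  exists 0; split => [| y |]; first exact: dvdz0.
    by have := V0 y.
  by rewrite big_pred0.
have shift y : h y = hg y + (h v - hg v).
  by have := lift_diff_connect g_lift hg_lift (e_conn y v); lia.
exists (h v - hg v); split => [| y | ].
- by have := g_lift.1 v; have := hg_lift.1 v; lia.
- by rewrite -shift.
- by under eq_bigr do rewrite -shift.
Qed.

End Lifts.

Lemma sum_by_level (T : finType) (k : T -> nat) (phi : nat -> nat) N :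
    (forall y, k y < N) ->
  \sum_y phi (k y) = \sum_(i < N) phi i * #|[set y | k y == i]|.
Proof.
move=> k_lt; transitivity (\sum_y \sum_(i < N) (k y == i) * phi i).
  apply: eq_bigr => y _; rewrite (bigD1 (Ordinal (k_lt y))) //= eqxx mul1n big1 ?addn0 //.
  by move=> i; rewrite -val_eqE eq_sym => /negbTE ->.
rewrite exchange_big; apply: eq_bigr => i _.
rewrite -sum1dep_card big_distrr /= [RHS]big_mkcond.
by apply: eq_bigr => y _; case: (k y == i); rewrite ?mul1n ?muln1.
Qed.

Lemma initial_segment_exists (T : finType) (d : T -> nat) (R : {set T}) s :
    s <= #|R| ->
  exists S : {set T}, [/\ S \subset R, #|S| = s &
    {in R &, forall x y, d x < d y -> y \in S -> x \in S}].
Proof.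
elim: s => [|s IHs] s_le.
  by exists set0; split; rewrite ?sub0set ?cards0 // => x y _ _ _; rewrite inE.
have [S [SR cardS S_init]] := IHs (ltnW s_le).
have [z0 z0_in] : exists z0, z0 \in R :\: S.
  by apply/set0Pn; rewrite -card_gt0 cardsD (setIidPr SR); lia.
pose z := [arg min_(z < z0 in R :\: S) d z].
have [z_in z_min] : z \in R :\: S /\ {in R :\: S, forall y, d z <= d y}.
  by rewrite /z; case: arg_minnP.
have /setDP[zR zS] := z_in.
exists (z |: S); split.
- by rewrite subUset sub1set zR.
- by rewrite cardsU1 (negPf zS) cardS.
- move=> x y xR yR dxy /setU1P[yz | yS]; last by rewrite setU1r // (S_init x y).
  apply/setU1P; right; apply: contraTT dxy => xS.
  by rewrite -leqNgt yz z_min // inE xS.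
Qed.

(* k is d up to 2, then 2 on a d-initial segment S of the vertices beyond N_2, and 3 elsewhere. *)
Lemma levels_exist (T : finType) (d : T -> nat) t :
    #|[set y | d y == 2]| <= t <= #|[set y | 1 < d y]| ->
  exists k : T -> nat, [/\ forall y, k y <= 3, forall y, minn (k y) 2 = minn (d y) 2,
    forall x y, d y = (d x).+1 -> k y = k x \/ k y = (k x).+1
  & #|[set y | k y == 2]| = t].
Proof.
case/andP=> N2_le_t t_le.
set N2 := [set y | d y == 2] in N2_le_t *; set R := [set y | 2 < d y].
have N2R0 : N2 :&: R = set0 by apply/setP => y; rewrite !inE; case: eqP => // ->.
have cardR : #|[set y | 1 < d y]| = #|N2| + #|R|.
  have -> : [set y | 1 < d y] = N2 :|: R.
    by apply/setP => y; rewrite !inE; lia.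
  by rewrite cardsU N2R0 cards0 subn0.
have [|S [SR cardS S_init]] := @initial_segment_exists _ d R (t - #|N2|); first by lia.
pose k y := if d y <= 2 then d y else if y \in S then 2 else 3.
exists k; split.
- by move=> y; rewrite /k; case: ifP => [|_]; [lia | case: ifP].
- by move=> y; rewrite /k; case: (leqP (d y) 2) => ?; [lia | case: (y \in S)].
- move=> x y dxy; have := S_init x y; rewrite /k !inE.
  case: (leqP (d x) 2) => /= ?; case: (leqP (d y) 2) => /= ?;
    by case: (x \in S); case: (y \in S) => /=; lia.
- have -> : [set y | k y == 2] = N2 :|: S.
    apply/setP => y; rewrite !inE /k; case: (leqP (d y) 2) => [d_le2 | d_gt2].
      have yS : y \notin S by apply: contraTN d_le2 => /(subsetP SR); rewrite inE -ltnNge.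
      by rewrite (negbTE yS) orbF.
    by case: (y \in S); lia.
  rewrite cardsU (_ : N2 :&: S = set0) ?cards0; first by lia.
  by apply/eqP; rewrite -subset0 -N2R0 setIS.
Qed.

Lemma level_cost (T : finType) (k : T -> nat) (c : int) :
    (forall y, k y <= 3) -> #|[set y | k y == 0]| = 1 -> #|[set y | k y == 1]| = 1 ->
    #|[set y | k y == 2]| + 4 = uphalf #|T| -> (6 %| c)%Z ->
  2 * (3 * #|T|)./2 < \sum_y absz (c + 2 * (k y)%:Z - 8)%R.
Proof.
move=> k_le3 card0 card1 card2 c6.
have k_lt4 y : k y < 4 by rewrite ltnS.
have sum_levels phi : \sum_y phi (k y) = phi 0 * #|[set y | k y == 0]|
    + phi 1 * #|[set y | k y == 1]| + phi 2 * #|[set y | k y == 2]|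
    + phi 3 * #|[set y | k y == 3]|.
  by rewrite (sum_by_level phi k_lt4) !big_ord_recr big_ord0 /= add0n.
have card_split : #|T| = #|[set y | k y == 0]| + #|[set y | k y == 1]|
    + #|[set y | k y == 2]| + #|[set y | k y == 3]|.
  by have := sum_levels (fun _ => 1); rewrite sum1_card !mul1n.
have [c_le0 | c_ge6] : (c <= 0 \/ 6 <= c)%R by lia.
- apply: (@leq_trans (\sum_y (8 - 2 * k y))).
    by rewrite (sum_levels (fun i => 8 - 2 * i)); lia.
  by apply: leq_sum => y _; have := k_le3 y; lia.
- apply: (@leq_trans (\sum_y (if k y is 0 then 2 else 2 * k y - 2))).
    by rewrite (sum_levels (fun i => if i is 0 then 2 else 2 * i - 2)); lia.
  by apply: leq_sum => y _; have := k_le3 y; case: (k y) => [|i] /=; lia.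
Qed.

Theorem mainTheorem12 (V : finType) (e : rel V) :
  is_tree e ->
  (exists v : V, is_leaf e v /\ #|Nbhd e 2 v| + 4 <= uphalf #|V|) ->
  diam_ge (fun f : coloring V => proper3 e f) (col_adj e) ((3 * #|V|)./2).+1.
Proof.
move=> [[e_sym e_irr] [e_conn e_card]] [v [leaf_v N2_small]].
have [d0 d1 d_far] := leaf_dist_cards (fun x => e_conn v x) e_irr leaf_v.
set d := dist (fun x => e_conn v x) in d0 d1 d_far.
have d_slope : unit_slope e d := tree_dist_slope _ e_sym e_card.
have N2E : Nbhd e 2 v = [set y | d y == 2].
  by apply/setP => y; rewrite !inE at_dist_dist.
rewrite N2E in N2_small.
have [|k [k_le3 k_low k_mono k2]] := @levels_exist _ d (uphalf #|V| - 4); first by lia.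
have k_card i : i < 2 -> #|[set y | k y == i]| = #|[set y | d y == i]|.
  by move=> i_lt2; apply: eq_card => y; rewrite !inE; have := k_low y; lia.
pose hf y := d y + 8 - 2 * k y.
have hf_slope : unit_slope e hf.
  move=> x y /d_slope[] dxy; have := k_mono _ _ dxy;
    by have := k_le3 x; have := k_le3 y; rewrite /hf; lia.
have hf_lift := mod3_coloring_lift hf_slope; have d_lift := mod3_coloring_lift d_slope.
exists (mod3_coloring hf), (mod3_coloring d).
split; first exact: lift_proper hf_lift.
split; first exact: lift_proper d_lift.
move=> j j_small; apply/negP => walk_fg.
have [c [c3 c_even cost]] := col_walk_shift e_conn walk_fg hf_lift d_lift.
have c6 : (6 %| c)%Z by have := c_even v; have := k_le3 v; rewrite /hf; lia.
have k0 : #|[set y | k y == 0]| = 1 by rewrite k_card.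
have k1 : #|[set y | k y == 1]| = 1 by rewrite k_card.
have k2' : #|[set y | k y == 2]| + 4 = uphalf #|V| by lia.
have := level_cost k_le3 k0 k1 k2' c6.
rewrite (eq_bigr (fun y => absz ((d y)%:Z + c - (hf y)%:Z)%R)) => [| y _]; first by lia.
by rewrite /hf; have := k_le3 y; lia.
Qed.
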